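(* Every finite chordal trigraph admits a tree representation.
   Context: A trigraph is a triple $H'=(V,E_B,E_R)$ where $E_B,E_R$ are disjoint subsets of $\binom V2$, called black and red edges. For $u\ne v\in V$, the adjacency type of $uv$ is `black' if $uv\in E_B$, `red' if $uv\in E_R$, and `non-edge' otherwise. The total graph of $H'$ is $\mathcal T(H')=(V,E_B\cup E_R)$; $H'$ is chordal if its total graph has no induced cycle of length at least $4$. In a rooted tree, a node is its own ancestor and descendant; $\mathrm{ancestors}(v)$, $\mathrm{desc}(v)$, $\mathrm{parent}(v)$ have the usual meaning, and siblings are distinct nodes with the same parent. A tree representation of a chordal trigraph $H'$ with $H:=\mathcal T(H')$ is a rooted tree $T$ with $V(T)=V(H)$ (not necessarily a subgraph of $H$) such that: (1) for every $v\in V(H)$, $N_H(v)\cap \mathrm{ancestors}(v)$ is a clique in $H$; (2) for every non-root $v$, $N_H(v)\subseteq \mathrm{desc}(v)\cup(\mathrm{ancestors}(v)\cap N_H[\mathrm{parent}(v)])$; (3) if $u$ and $v$ are siblings in $T$, then $u$ and $v$ have a common ancestor $x$ such that $ux$ and $vx$ have distinct adjacency types in $H'$. *)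

From mathcomp Require Import all_boot.
Set Implicit Arguments. Unset Strict Implicit. Unset Printing Implicit Defensive.

(* A trigraph on a finite vertex type V: two relations black, red encoding
   the edge sets E_B, E_R as sets of unordered pairs of distinct vertices. *)
Definition is_trigraph (V : finType) (black red : rel V) : Prop :=
  [/\ symmetric black, symmetric red, irreflexive black, irreflexive red &
      forall u v, ~~ (black u v && red u v)].

Definition tadj (V : finType) (black red : rel V) : rel V :=
  fun u v => black u v || red u v.

Inductive adj_type := ATBlack | ATRed | ATNon.

Definition adjtype (V : finType) (black red : rel V) (u v : V) : adj_type :=
  if black u v then ATBlack else if red u v then ATRed else ATNon.

Definition induced_cycle (V : finType) (e : rel V) (c : seq V) : Prop :=
  uniq c /\
  forall (x0 : V) i j, i < size c -> j < size c -> i != j ->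
    e (nth x0 c i) (nth x0 c j)
     = ((j == i.+1 %% size c) || (i == j.+1 %% size c)).

Definition chordal_trigraph (V : finType) (black red : rel V) : Prop :=
  forall c : seq V, induced_cycle (tadj black red) c -> size c < 4.

(* A rooted tree with vertex set V, given by a parent function
   (par v = None iff v is the root). *)
Definition par_rel (V : finType) (par : V -> option V) : rel V :=
  fun x y => par x == Some y.

(* a is an ancestor of v (reflexive: v is its own ancestor) *)
Definition ancestor (V : finType) (par : V -> option V) (a v : V) : bool :=
  connect (par_rel par) v a.

(* par defines a rooted tree on V: every vertex reaches a root by following
   parents (so there are no cycles), and there is at most one root (exactly
   one when V is nonempty). *)
Definition rooted_tree (V : finType) (par : V -> option V) : Prop :=
  (forall v, exists2 r, par r = None & ancestor par r v) /\
  (forall r r', par r = None -> par r' = None -> r = r').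

Definition is_clique (V : finType) (e : rel V) (S : pred V) : Prop :=
  forall x y, S x -> S y -> x != y -> e x y.

Definition tree_representation (V : finType) (black red : rel V)
    (par : V -> option V) : Prop :=
  let H := tadj black red in
  [/\ rooted_tree par,
      (* (1) *)
      (forall v, is_clique H (fun u => H v u && ancestor par u v)),
      (* (2) *)
      (forall v p, par v = Some p -> forall u, H v u ->
         ancestor par v u || (ancestor par u v && ((u == p) || H p u))) &
      (* (3) *)
      (forall u v p, u != v -> par u = Some p -> par v = Some p ->
         exists x, [/\ ancestor par x u, ancestor par x v &
                      adjtype black red u x <> adjtype black red v x])].

(* Dirac's lemma: in a chordal graph, a vertex a that is not adjacent to all
   others has a simplicial non-neighbour.  For a component C of the
   non-neighbours of a, the neighbourhood N of C is a clique, since a chordless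
   path through C between two non-adjacent vertices of N closes up with a into
   an induced cycle of length at least 4.  A simplicial vertex of the smaller
   graph on C u N can be chosen in C, and it stays simplicial in the whole graph.

   A tree representation is then built by adding simplicial vertices one at a
   time.  The new vertex s hangs below a deepest vertex w such that every
   neighbour of s is an ancestor of w equal or adjacent to w.  The clique of
   neighbours of s then lies on the path to w.  Also, a child of w having the
   same adjacency type as s to every ancestor of w would be such a vertex too,
   and deeper, which gives condition (3). *)

From mathcomp Require Import all_boot zify.
From Stdlib Require Import Classical.
Set Implicit Arguments. Unset Strict Implicit. Unset Printing Implicit Defensive.

Section ChordalGraph.
Variables (V : finType) (e : rel V).
Hypotheses (e_sym : symmetric e) (e_irr : irreflexive e).
Hypothesis e_chordal : forall c, induced_cycle e c -> size c < 4.

Lemma induced_cycle_mkseq (f : nat -> V) n :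
  {in gtn n &, injective f} ->
  (forall i j, i < j < n -> e (f i) (f j) = (j == i.+1) || (i == 0) && (j == n.-1)) ->
  induced_cycle e (mkseq f n).
Proof.
move=> f_inj f_adj; split; first exact/mkseq_uniqP.
move=> x0 i j; rewrite size_mkseq => lt_in lt_jn ne_ij; rewrite !nth_mkseq //.
wlog lt_ij : i j lt_in lt_jn ne_ij / i < j.
  move=> hw; have [lt_ij | lt_ji | eq_ij] := ltngtP i j; first exact: hw.
    by rewrite e_sym orbC hw // eq_sym.
  by rewrite eq_ij eqxx in ne_ij.
rewrite f_adj ?lt_ij // (modn_small (m := i.+1)); last lia.
have [lt_j1n | <-] : j.+1 < n \/ j.+1 = n by lia.
  by rewrite modn_small //; lia.
by rewrite modnn; lia.
Qed.

Definition walk (D : {set V}) (x y : V) (g : nat -> V) (k : nat) : Prop :=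
  [/\ g 0 = x, g k = y, forall t, 0 < t < k -> g t \in D
    & forall t, t < k -> e (g t) (g t.+1)].

Definition chordless (g : nat -> V) (k : nat) : Prop :=
  forall i j, i.+1 < j <= k -> ~~ e (g i) (g j).

Lemma walk_shortcut D x y g k i j :
  walk D x y g k -> i.+1 < j <= k -> e (g i) (g j) ->
  walk D x y (fun t => if t <= i then g t else g (t + (j - i.+1))) (k - (j - i.+1)).
Proof.
case=> g0 gk gD gE lt_ijk e_ij; split=> //.
- by rewrite ifN; [rewrite subnK //|]; lia.
- by move=> t lt_t; case: ifP => _; apply: gD; lia.
move=> t lt_t; have [lt_ti | lt_it | ->] := ltngtP t i.
- by apply: gE; lia.
- by rewrite addSn; apply: gE; lia.
- by have -> : i.+1 + (j - i.+1) = j by lia.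
Qed.

Lemma exists_chordless_walk D x y g k :
  walk D x y g k -> exists g' k', walk D x y g' k' /\ chordless g' k'.
Proof.
elim/ltn_ind: k g => k IH g g_walk.
have [/existsP[i /existsP[j /andP[lt_ij e_ij]]] | no_chord] :=
  boolP [exists i : 'I_k.+1, exists j : 'I_k.+1, (i.+1 < j) && e (g i) (g j)].
  have lt_ijk : i.+1 < j <= k by rewrite lt_ij -ltnS ltn_ord.
  by apply: IH (walk_shortcut g_walk lt_ijk e_ij); lia.
exists g, k; split=> // i j lt_ijk; apply: contra no_chord => e_ij.
by apply/existsP; exists (inord i); apply/existsP; exists (inord j); rewrite !inordK //; lia.
Qed.

(* A repeated vertex g i = g j would make the edge into g i (or, when i = 0,
   the edge out of g j) a chord. *)
Lemma chordless_walk_inj D x y g k :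
  x != y -> walk D x y g k -> chordless g k -> {in gtn k.+1 &, injective g}.
Proof.
move=> ne_xy [g0 gk _ gE] g_chordless.
suff ne_g i j : i < j <= k -> g i != g j.
  move=> i j; rewrite !inE => lt_ik lt_jk eq_g.
  by case: (ltngtP i j) => // [lt_ij | lt_ji]; [move: (ne_g i j) | move: (ne_g j i)];
     rewrite eq_g eqxx; lia.
move=> lt_ijk; apply/eqP=> eq_g; case: i lt_ijk eq_g => [|i] lt_ijk eq_g.
  have [lt_jk | eq_jk] : j < k \/ j = k by lia.
    by have /negP[] := g_chordless 0 j.+1 ltac:(lia); rewrite eq_g gE.
  by move: ne_xy; rewrite -g0 -gk eq_g eq_jk eqxx.
by have /negP[] := g_chordless i j ltac:(lia); rewrite -eq_g gE //; lia.
Qed.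

Lemma walk_apex_induced_cycle (D : {set V}) a x y g k :
  a \notin D -> {in D, forall z, ~~ e a z} -> e a x -> e a y -> x != y ->
  walk D x y g k -> chordless g k ->
  induced_cycle e (mkseq (fun t => if t is t'.+1 then g t' else a) k.+2).
Proof.
move=> aD a_D ax ay ne_xy g_walk g_chordless.
have g_inj := chordless_walk_inj ne_xy g_walk g_chordless.
case: g_walk => g0 gk gD gE.
have ne_ga t : t <= k -> g t != a.
  move=> le_tk; apply/eqP=> eq_ga.
  have [t0 | [tk | lt_t]] : t = 0 \/ t = k \/ 0 < t < k by lia.
  - by move: ax; rewrite -g0 -t0 eq_ga e_irr.
  - by move: ay; rewrite -gk -tk eq_ga e_irr.
  - by move: (gD t lt_t); rewrite eq_ga (negbTE aD).
apply: induced_cycle_mkseq => [[|i] [|j] | [|i] [|j]] //=; rewrite ?inE.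
- by move=> _ le_jk /esym/eqP; rewrite (negbTE (ne_ga j _)).
- by move=> le_ik _ /eqP; rewrite (negbTE (ne_ga i _)).
- by move=> le_ik le_jk /g_inj -> //; rewrite inE.
- move=> lt_j; have [-> | [-> | lt_jk]] : j = 0 \/ j = k \/ 0 < j < k by lia.
  + by rewrite g0 ax.
  + by rewrite gk ay; apply/esym; lia.
  + by rewrite (negbTE (a_D _ (gD j lt_jk))); apply/esym; lia.
- move=> lt_ij; have [-> | lt_ij1] : j = i.+1 \/ i.+1 < j by lia.
    by rewrite gE ?eqxx //; lia.
  by rewrite (negbTE (g_chordless i j _)); [apply/esym|]; lia.
Qed.

Lemma nonadjacent_neighbours_no_walk (D : {set V}) a x y g k :
  a \notin D -> {in D, forall z, ~~ e a z} -> e a x -> e a y -> x != y -> ~~ e x y ->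
  ~ walk D x y g k.
Proof.
move=> aD a_D ax ay ne_xy nxy /exists_chordless_walk[g' [k' [g'_walk g'_chordless]]].
have := e_chordal (walk_apex_induced_cycle aD a_D ax ay ne_xy g'_walk g'_chordless).
rewrite size_mkseq; case: g'_walk => g0 gk _ gE.
case: k' gk gE {g'_chordless} => [|[|k']] gk gE; last by lia.
  by move: ne_xy; rewrite -g0 -gk eqxx.
by move: (gE 0 isT) nxy; rewrite g0 gk => ->.
Qed.

Definition induced_rel (D : {set V}) : rel V :=
  [rel p q | [&& p \in D, q \in D & e p q]].

Lemma connect_walk (D : {set V}) x y u v :
  connect (induced_rel D) u v ->
  u \in D -> e x u -> e v y -> exists g k, walk D x y g k.
Proof.
case/connectP=> q /(pathP u) uq -> uD xu vy.
have qD t : t < size q -> nth u q t \in D by case/uq/and3P.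
exists (fun t => if t is t'.+1 then (if t' <= size q then nth u (u :: q) t' else y) else x).
exists (size q).+2; split=> //.
- by rewrite ltnn.
- move=> [|[|t]] //= lt_t; rewrite ifT; try lia.
  by apply: qD; lia.
move=> [|t] lt_t /=; first exact: xu.
have [lt_tq | ->] : t < size q \/ t = size q by lia.
  by rewrite lt_tq ltnW //; case/uq/and3P: lt_tq.
by rewrite leqnn ltnn (nth_last u (u :: q)).
Qed.

Definition simplicial (S : {set V}) (v : V) : Prop :=
  is_clique e [pred u | (u \in S) && e v u].

Definition nonneighbours (S : {set V}) (a : V) : {set V} :=
  [set z in S | (z != a) && ~~ e a z].

Definition component (D : {set V}) (y : V) : {set V} :=
  [set z in D | connect (induced_rel D) y z].

Definition boundary (S C : {set V}) : {set V} :=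
  [set z in S | (z \notin C) && [exists c in C, e c z]].

Lemma notin_nonneighbours S a : a \notin nonneighbours S a.
Proof. by rewrite inE eqxx andbF. Qed.

Lemma nonneighbours_nonadj S a : {in nonneighbours S a, forall z, ~~ e a z}.
Proof. by move=> z /setIdP[_ /andP[]]. Qed.

Lemma clique_or_nonneighbour (S : {set V}) :
  is_clique e [pred z in S] \/ exists x y, x \in S /\ y \in nonneighbours S x.
Proof.
have [/exists_inP[x xS /set0Pn[y yD]] | no_nonadj] :=
  boolP [exists x in S, nonneighbours S x != set0]; [by right; exists x, y | left].
move=> p q /= pS qS ne_pq; apply: contraT => npq; case/negP: no_nonadj.
by apply/exists_inP; exists p => //; apply/set0Pn; exists q; rewrite inE qS eq_sym ne_pq.
Qed.

Section NonNeighbourComponent.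
Variables (S : {set V}) (a y : V).
Local Notation D := (nonneighbours S a).
Local Notation C := (component D y).
Local Notation N := (boundary S C).

Lemma component_closed c z : c \in C -> z \in D -> e c z -> z \in C.
Proof.
move=> /setIdP[cD yc] zD cz; apply/setIdP; split=> //.
by apply: connect_trans yc (connect1 _); rewrite /induced_rel /= cD zD.
Qed.

Lemma boundary_adj z : z \in N -> e a z.
Proof.
rewrite inE => /and3P[zS zC /exists_inP[c cC cz]].
have [/setIdP[_ /andP[_ nac]] _] := setIdP cC.
apply: contraR zC => naz; apply: (component_closed cC _ cz).
rewrite inE zS naz andbT; apply/eqP=> za.
by move: nac; rewrite -za e_sym cz.
Qed.

Lemma boundary_clique : is_clique e [pred z in N].
Proof.
move=> x x' xN x'N ne_xx'; apply: contraT => nxx'; exfalso.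
have [c cC cx] : exists2 c, c \in C & e c x by case/setIdP: xN => _ /andP[_ /exists_inP].
have [c' c'C c'x'] : exists2 c, c \in C & e c x' by case/setIdP: x'N => _ /andP[_ /exists_inP].
have cc' : connect (induced_rel D) c c'.
  case/setIdP: cC => _; case/setIdP: c'C => _ yc'.
  rewrite (sym_connect_sym _) => [cy|]; first exact: connect_trans cy yc'.
  by move=> p q; rewrite /induced_rel /= andbCA e_sym.
have [cD _] := setIdP cC.
have xc : e x c by rewrite e_sym.
have [g [k g_walk]] := connect_walk cc' cD xc c'x'.
apply: (nonadjacent_neighbours_no_walk (a := a) _ _ _ _ ne_xx' nxx' g_walk).
- exact: notin_nonneighbours.
- exact: nonneighbours_nonadj.
- exact: boundary_adj.
- exact: boundary_adj.
Qed.

Lemma component_boundary_card : a \in S -> #|C :|: N| < #|S|.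
Proof.
move=> aS; apply: proper_card; apply/properP; split.
  by apply/subsetP=> z /setUP[/setIdP[/setIdP[zS _] _] | /setIdP[zS _]].
exists a => //; apply/setUP=> -[/setIdP[aD _] | /boundary_adj].
  by rewrite (negbTE (notin_nonneighbours S a)) in aD.
by rewrite e_irr.
Qed.

Lemma simplicial_component v : v \in C -> simplicial (C :|: N) v -> simplicial S v.
Proof.
move=> vC v_simpl.
have CN_nbr z : z \in S -> e v z -> z \in C :|: N.
  move=> zS vz; rewrite in_setU; have [//|zC] /= := boolP (z \in C).
  by rewrite inE zS zC; apply/exists_inP; exists v.
move=> x x' /andP[xS vx] /andP[x'S vx']; apply: v_simpl; by rewrite /= ?CN_nbr.
Qed.
End NonNeighbourComponent.

Lemma exists_simplicial_nonneighbour (S : {set V}) a y :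
  a \in S -> y \in nonneighbours S a ->
  exists2 v, v \in nonneighbours S a & simplicial S v.
Proof.
have [n] := ubnP #|S|; elim: n => // n IH in S a y *; rewrite ltnS => le_Sn aS yD.
set C := component (nonneighbours S a) y; set N := boundary S C.
have {}IH x x' : x \in C :|: N -> x' \in nonneighbours (C :|: N) x ->
    exists2 v, v \in nonneighbours (C :|: N) x & simplicial (C :|: N) v.
  move=> xCN x'D; apply: (IH _ _ _ _ xCN x'D).
  exact: leq_trans (component_boundary_card y aS) le_Sn.
have [v vC v_simpl] : exists2 v, v \in C & simplicial (C :|: N) v.
  have [CN_clique | [x [x' [xCN x'D]]]] := clique_or_nonneighbour (C :|: N).
    exists y; first by rewrite inE yD connect0.
    by move=> p q /andP[pCN _] /andP[qCN _]; apply: CN_clique.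
  have [v /setIdP[vCN /andP[vx nxv]] v_simpl] := IH x x' xCN x'D.
  have [vC | vC] := boolP (v \in C); first by exists v.
  have vN : v \in N by move: vCN; rewrite in_setU (negbTE vC).
  have xD : x \in nonneighbours (C :|: N) v by rewrite inE xCN eq_sym vx e_sym.
  have [v' /setIdP[v'CN /andP[v'v nvv']] v'_simpl] := IH v x vCN xD.
  exists v' => //; move: v'CN; rewrite in_setU => /orP[// | v'N].
  by move: nvv'; rewrite (boundary_clique vN v'N) // eq_sym.
by exists v; [case/setIdP: vC | exact: simplicial_component vC v_simpl].
Qed.

Lemma exists_simplicial (S : {set V}) : S != set0 -> exists2 v, v \in S & simplicial S v.
Proof.
case/set0Pn=> a aS; have [S_clique | [x [y [xS yD]]]] := clique_or_nonneighbour S.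
  by exists a => // p q /andP[pS _] /andP[qS _]; apply: S_clique.
by have [v /setIdP[vS _] v_simpl] := exists_simplicial_nonneighbour xS yD; exists v.
Qed.
End ChordalGraph.

Section Ancestor.
Variables (V : finType) (par : V -> option V).

Lemma ancestor_refl v : ancestor par v v.
Proof. exact: connect0. Qed.

Lemma ancestor_trans a b c : ancestor par a b -> ancestor par b c -> ancestor par a c.
Proof. by move=> ab bc; apply: connect_trans bc ab. Qed.

Lemma ancestor_parent v p : par v = Some p -> ancestor par p v.
Proof. by move=> vp; apply: connect1; rewrite /par_rel /= vp. Qed.

Lemma ancestorE a v :
  ancestor par a v = (a == v) || (if par v is Some p then ancestor par a p else false).
Proof.
rewrite /ancestor; apply/idP/idP.
  move=> /connectP[q vq ->]; case: q vq => [_ | p q /andP[/eqP vp pq]] /=; first by rewrite eqxx.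
  by rewrite vp; apply/orP; right; apply/connectP; exists q.
case/orP=> [/eqP-> | ]; first exact: ancestor_refl.
by case vp: (par v) => [p|] // ap; apply: ancestor_trans ap (ancestor_parent vp).
Qed.
End Ancestor.

Section TreeRepresentation.
Variables (V : finType) (black red : rel V).
Hypothesis V_trigraph : is_trigraph black red.
Local Notation H := (tadj black red).
Local Notation adjtype := (adjtype black red).

Lemma tadj_sym : symmetric H.
Proof. by case: V_trigraph => b_sym r_sym _ _ _ x y; rewrite /tadj b_sym r_sym. Qed.

Lemma tadj_irr : irreflexive H.
Proof. by case: V_trigraph => _ _ b_irr r_irr _ x; rewrite /tadj b_irr r_irr. Qed.

Lemma tadj_adjtype u v x : adjtype u x = adjtype v x -> H u x = H v x.
Proof.
by rewrite /adjtype /tadj; case: (black u x) (red u x) (black v x) (red v x) => [] [] [] [].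
Qed.

(* Conditions (1)-(3) for the sub-trigraph induced on S; the ranking rk
   certifies that parent chains starting in S reach a root. *)
Record forest_rep (S : {set V}) (par : V -> option V) (rk : V -> nat) : Prop := {
  rep_parent_in : forall v p, v \in S -> par v = Some p -> p \in S;
  rep_rank : forall v p, v \in S -> par v = Some p -> rk p < rk v;
  rep_root : forall r r', r \in S -> r' \in S -> par r = None -> par r' = None -> r = r';
  rep_clique : forall v, v \in S -> is_clique H (fun u => H v u && ancestor par u v);
  rep_nbr : forall v p u, v \in S -> u \in S -> par v = Some p -> H v u ->
    ancestor par v u || (ancestor par u v && ((u == p) || H p u));
  rep_sibling : forall u v p, u \in S -> v \in S -> u != v ->
    par u = Some p -> par v = Some p ->
    exists x, [/\ ancestor par x u, ancestor par x v & adjtype u x <> adjtype v x]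
}.

Section ForestRep.
Variables (S : {set V}) (par : V -> option V) (rk : V -> nat).
Hypothesis rep : forest_rep S par rk.

Lemma ancestor_in_rank a v :
  v \in S -> ancestor par a v -> a \in S /\ (a != v -> rk a < rk v).
Proof.
have [n] := ubnP (rk v); elim: n => // n IH in v *; rewrite ltnS => le_vn vS.
rewrite ancestorE; have [-> _ | ne_av /=] := eqVneq a v; first by split.
case vp: (par v) => [p|] // ap.
have lt_pv := rep_rank rep vS vp.
have [aS lt_ap] := IH p (leq_trans lt_pv le_vn) (rep_parent_in rep vS vp) ap.
split=> // _; have [-> // | ne_ap] := eqVneq a p.
exact: ltn_trans (lt_ap ne_ap) lt_pv.
Qed.

Lemma ancestor_root v : v \in S -> exists2 r, par r = None & ancestor par r v.
Proof.
have [n] := ubnP (rk v); elim: n => // n IH in v *; rewrite ltnS => le_vn vS.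
case vp: (par v) => [p|]; last by exists v; last exact: ancestor_refl.
have [r r_root rp] := IH p (leq_trans (rep_rank rep vS vp) le_vn) (rep_parent_in rep vS vp).
by exists r => //; apply: ancestor_trans rp (ancestor_parent vp).
Qed.

Lemma adjacent_comparable x y :
  x \in S -> y \in S -> H x y -> ancestor par x y || ancestor par y x.
Proof.
move=> xS yS xy; case xp: (par x) => [p|].
  by case/orP: (rep_nbr rep xS yS xp xy) => [-> | /andP[-> _]]; rewrite ?orbT.
case yq: (par y) => [q|].
  rewrite tadj_sym in xy.
  by case/orP: (rep_nbr rep yS xS yq xy) => [-> | /andP[-> _]]; rewrite ?orbT.
by move: xy; rewrite (rep_root rep xS yS xp yq) tadj_irr.
Qed.
End ForestRep.

Section Attach.
Variables (S : {set V}) (par : V -> option V) (rk : V -> nat) (s : V).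
Hypothesis rep : forest_rep S par rk.
Hypothesis s_simplicial : simplicial H (s |: S) s.

Definition covers_nbrs (w : V) : bool :=
  [forall x in S, H s x ==> ancestor par x w && ((x == w) || H w x)].

Lemma exists_covers_nbrs : S != set0 -> exists2 w, w \in S & covers_nbrs w.
Proof.
move=> S_nonempty; case: (set_0Vmem [set x in S | H s x]) => [K0 | [d0 d0K]].
  have [z zS] := set0Pn _ S_nonempty; exists z => //.
  apply/forall_inP=> x xS; apply/implyP=> sx.
  by have := in_set0 x; rewrite -K0 inE xS sx.
have [d /setIdP[dS sd] d_max] := arg_maxnP rk d0K.
exists d => //; apply/forall_inP=> x xS; apply/implyP=> sx.
have [-> | ne_xd] := eqVneq x d; first by rewrite ancestor_refl.
have xd : H x d by apply: s_simplicial; rewrite /= ?in_setU1 ?xS ?dS ?sx ?sd ?orbT.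
rewrite tadj_sym xd orbT andbT.
case/orP: (adjacent_comparable rep xS dS xd) => // dx.
have [_ lt_dx] := ancestor_in_rank rep xS dx.
have le_xd : rk x <= rk d by apply: d_max; apply/setIdP.
by move: lt_dx; rewrite eq_sym ne_xd ltnNge le_xd => /(_ isT).
Qed.

Lemma exists_attach_point : S != set0 ->
  exists w, [/\ w \in S, covers_nbrs w &
    forall v, v \in S -> par v = Some w ->
      exists2 x, ancestor par x w & adjtype s x <> adjtype v x].
Proof.
move=> /exists_covers_nbrs[w0 w0S w0_covers].
have w0W : (w0 \in S) && covers_nbrs w0 by rewrite w0S.
have [w /andP[wS w_covers] w_max] :=
  @arg_maxnP _ w0 [pred w | (w \in S) && covers_nbrs w] rk w0W.
exists w; split=> // v vS vw; apply: NNPP => no_x.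
have lt_wv := rep_rank rep vS vw.
suff : rk v <= rk w by lia.
apply: w_max; rewrite /= vS; apply/forall_inP=> x xS; apply/implyP=> sx.
have /andP[xw _] := implyP (forall_inP w_covers x xS) sx.
have eq_adj : adjtype s x = adjtype v x by apply: NNPP => ne; apply: no_x; exists x.
by rewrite (ancestor_trans xw (ancestor_parent vw)) -(tadj_adjtype eq_adj) sx orbT.
Qed.

Hypothesis s_notin : s \notin S.

Definition attach (w : V) (v : V) : option V := if v == s then Some w else par v.

Lemma in_neq_new v : v \in S -> v != s.
Proof. by apply: contraTneq => ->. Qed.

Lemma attach_in w v : v \in S -> attach w v = par v.
Proof. by move=> vS; rewrite /attach (negbTE (in_neq_new vS)). Qed.

Lemma attach_new w : attach w s = Some w.
Proof. by rewrite /attach eqxx. Qed.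

Lemma ancestor_attach_in w a v : v \in S -> ancestor (attach w) a v = ancestor par a v.
Proof.
have [n] := ubnP (rk v); elim: n => // n IH in v *; rewrite ltnS => le_vn vS.
rewrite !ancestorE attach_in //; case vp: (par v) => [p|] //.
by rewrite IH ?(rep_parent_in rep vS vp) ?(leq_trans (rep_rank rep vS vp)).
Qed.

Lemma ancestor_attach_new w a :
  w \in S -> ancestor (attach w) a s = (a == s) || ancestor par a w.
Proof. by move=> wS; rewrite ancestorE attach_new ancestor_attach_in. Qed.

Section Insert.
Variable w : V.
Hypotheses (wS : w \in S) (w_covers : covers_nbrs w).
Hypothesis w_children : forall v, v \in S -> par v = Some w ->
  exists2 x, ancestor par x w & adjtype s x <> adjtype v x.

Lemma attach_clique v :
  v \in s |: S -> is_clique H (fun u => H v u && ancestor (attach w) u v).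
Proof.
move=> /setU1P[-> | vS] x y /andP[vx xv] /andP[vy yv] ne_xy.
  have in_S z : H s z -> ancestor (attach w) z s -> z \in s |: S.
    rewrite ancestor_attach_new // => sz /orP[/eqP zs | zw].
      by move: sz; rewrite zs tadj_irr.
    by rewrite in_setU1 (ancestor_in_rank rep wS zw).1 orbT.
  by apply: s_simplicial; rewrite /= ?in_S ?vx ?vy.
rewrite !ancestor_attach_in // in xv yv.
by apply: (rep_clique rep vS); rewrite /= ?vx ?vy.
Qed.

Lemma attach_nbr v p u : v \in s |: S -> u \in s |: S -> attach w v = Some p -> H v u ->
  ancestor (attach w) v u || (ancestor (attach w) u v && ((u == p) || H p u)).
Proof.
have covers x : x \in S -> H s x -> ancestor par x w && ((x == w) || H w x).
  by move=> xS; apply/implyP; apply: (forall_inP w_covers).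
move=> /setU1P[-> | vS] /setU1P[-> | uS].
- by move=> _; rewrite tadj_irr.
- rewrite attach_new => -[<-] su; case/andP: (covers u uS su) => uw ->.
  by rewrite ancestor_attach_new // uw !orbT.
- rewrite attach_in // => _ vs; rewrite tadj_sym in vs.
  by case/andP: (covers v vS vs) => vw _; rewrite ancestor_attach_new // vw orbT.
- by rewrite attach_in // !ancestor_attach_in //; apply: (rep_nbr rep).
Qed.

Lemma attach_sibling u v p : u \in s |: S -> v \in s |: S -> u != v ->
  attach w u = Some p -> attach w v = Some p ->
  exists x, [/\ ancestor (attach w) x u, ancestor (attach w) x v &
              adjtype u x <> adjtype v x].
Proof.
move=> /setU1P[-> | uS] /setU1P[-> | vS] ne_uv.
- by rewrite eqxx in ne_uv.
- rewrite attach_new attach_in // => -[<-] vw.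
  have [x xw ne_adj] := w_children vS vw; exists x.
  rewrite ancestor_attach_new // ancestor_attach_in // xw orbT.
  by rewrite (ancestor_trans xw (ancestor_parent vw)).
- rewrite attach_in // attach_new => uw [pw]; rewrite -pw in uw.
  have [x xw ne_adj] := w_children uS uw; exists x.
  rewrite ancestor_attach_new // ancestor_attach_in // xw orbT.
  by rewrite (ancestor_trans xw (ancestor_parent uw)); split=> // /esym.
- rewrite !attach_in // => up vp.
  have [x [xu xv ne_adj]] := rep_sibling rep uS vS ne_uv up vp.
  by exists x; rewrite !ancestor_attach_in.
Qed.

Lemma forest_rep_attach :
  forest_rep (s |: S) (attach w) (fun v => if v == s then (rk w).+1 else rk v).
Proof.
split.
- move=> v p /setU1P[-> | vS].
    by rewrite attach_new => -[<-]; rewrite in_setU1 wS orbT.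
  by rewrite attach_in // => vp; rewrite in_setU1 (rep_parent_in rep vS vp) orbT.
- move=> v p /setU1P[-> | vS].
    by rewrite attach_new eqxx => -[<-]; rewrite (negbTE (in_neq_new wS)).
  rewrite attach_in // => vp; have pS := rep_parent_in rep vS vp.
  by rewrite !ifN ?in_neq_new ?(rep_rank rep vS vp).
- move=> r r' /setU1P[-> | rS]; first by rewrite attach_new.
  move=> /setU1P[-> | r'S]; first by rewrite attach_new.
  by rewrite !attach_in //; apply: (rep_root rep).
- exact: attach_clique.
- exact: attach_nbr.
- exact: attach_sibling.
Qed.
End Insert.
End Attach.

Lemma forest_rep_set0 (par : V -> option V) (rk : V -> nat) : forest_rep set0 par rk.
Proof. by split=> [v p | v p | r r' | v | v p u | u v p]; rewrite inE. Qed.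

Lemma forest_rep_set1 s : forest_rep [set s] (fun _ => None) (fun _ => 0).
Proof.
split=> // [r r' /set1P-> /set1P-> // | v /set1P-> x y /andP[sx xs]].
rewrite ancestorE orbF in xs.
by move: sx; rewrite (eqP xs) tadj_irr.
Qed.

Hypothesis V_chordal : chordal_trigraph black red.

Lemma exists_forest_rep (S : {set V}) : exists par rk, forest_rep S par rk.
Proof.
have [n] := ubnP #|S|; elim: n => // n IH in S *; rewrite ltnS => le_Sn.
have [-> | S_nonempty] := eqVneq S set0.
  by exists (fun _ => None), (fun _ => 0); apply: forest_rep_set0.
have [s sS s_simplicial] := exists_simplicial tadj_sym tadj_irr V_chordal S_nonempty.
have [par [rk rep]] : exists par rk, forest_rep (S :\ s) par rk.
  by apply: IH; move: le_Sn; rewrite (cardsD1 s) sS.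
rewrite -(setD1K sS) in s_simplicial *.
have s_notin : s \notin S :\ s by rewrite setD11.
have [S's0 | S's_nonempty] := eqVneq (S :\ s) set0.
  by rewrite S's0 setU0; exists (fun _ => None), (fun _ => 0); apply: forest_rep_set1.
have [w [wS w_covers w_children]] := exists_attach_point rep s_simplicial S's_nonempty.
exists (attach par s w), (fun v => if v == s then (rk w).+1 else rk v).
exact: forest_rep_attach.
Qed.
End TreeRepresentation.

Theorem lemma3p1 (V : finType) (black red : rel V) :
  is_trigraph black red -> chordal_trigraph black red ->
  exists par : V -> option V, tree_representation black red par.
Proof.
move=> V_trigraph V_chordal.
have [par [rk rep]] := exists_forest_rep V_trigraph V_chordal [set: V].
exists par; split.
- split=> [v | r r']; first exact: (ancestor_root rep (in_setT v)).
  exact: (rep_root rep (in_setT r) (in_setT r')).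
- by move=> v; apply: (rep_clique rep (in_setT v)).
- by move=> v p vp u; apply: (rep_nbr rep (in_setT v) (in_setT u) vp).
- by move=> u v p; apply: (rep_sibling rep (in_setT u) (in_setT v)).
Qed.
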